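(* (i) Let $(A,\succ,\prec)$ be an anti-pre-Novikov algebra and $s\in A\otimes A$ define a factorizable anti-pre-Novikov bialgebra $(A,\succ,\prec,\Delta_{\succ,s},\Delta_{\prec,s})$, and let $\lambda\in k$ be nonzero. Define $\omega(x,y)=-\lambda\langle T_{s+\tau(s)}^{-1}(x),y\rangle$ for $x,y\in A$ and $P=T_s\omega^\sharp$. Then $(A,\succ,\prec,P,\omega)$ is a quadratic Rota–Baxter anti-pre-Novikov algebra of weight $\lambda$. (ii) Conversely, let $(A,\succ,\prec,P,\omega)$ be a quadratic Rota–Baxter anti-pre-Novikov algebra of weight $\lambda\neq0$, and let $s\in A\otimes A$ be defined by $T_s=P(\omega^\sharp)^{-1}$. Then $(A,\succ,\prec,\Delta_{\succ,s},\Delta_{\prec,s})$ is a factorizable anti-pre-Novikov bialgebra.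
   Context: $A$ is finite-dimensional over a field $k$. An anti-pre-Novikov algebra is $(A,\succ,\prec)$ such that with $x\circ y=x\succ y+x\prec y$: $(x\circ y-y\circ x)\succ z=y\succ(x\succ z)-x\succ(y\succ z)$; $x\prec(y\circ z)=(y\succ x)\prec z-(x\prec y)\prec z-y\succ(x\prec z)$; $(x\circ y)\succ z=-(x\succ z)\prec y$; $(x\prec y)\prec z=(x\prec z)\prec y$; $(x\circ y-y\circ x)\prec z=x\succ(y\circ z)-y\succ(x\circ z)$. Notation: $x\odot y=x\succ y+y\prec x$; $L_\ast(x)y=x\ast y$, $R_\ast(x)y=y\ast x$; $L_{\star}=L_{\circ}+R_{\circ}$, $L_{\odot}=L_{\succ}+R_{\prec}$; $\tau$ is the flip; $T_r:A^*\to A$, $\langle T_r(\zeta),\eta\rangle=\langle r,\zeta\otimes\eta\rangle$; $\omega^\sharp:A\to A^*$, $\langle\omega^\sharp(x),y\rangle=\omega(x,y)$. $r\in A\otimes A$ is invariant if $(I\otimes L_{\star}(x)-L_{\succ}(x)\otimes I)r=0$ and $(L_{\circ}(x)\otimes I-I\otimes L_{\odot}(x))r=0$ for all $x$. For $s=\sum_i a_i\otimes b_i$, the anti-pre-Novikov Yang–Baxter equation (APN-YBE) is $\sum_{i,j}a_i\circ a_j\otimes b_i\otimes b_j+\sum_{i,j}a_j\otimes a_i\otimes(b_i\odot b_j)+\sum_{i,j}a_i\otimes(b_i\prec a_j)\otimes b_j=0$. Given $s$, set $\Delta_{\succ,s}(x)=(I\otimes L_{\star}(x)-L_{\succ}(x)\otimes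 I)s$ and $\Delta_{\prec,s}(x)=(L_{\circ}(x)\otimes I-I\otimes L_{\odot}(x))s$. If $s$ solves the APN-YBE and $s+\tau(s)$ is invariant, $(A,\succ,\prec,\Delta_{\succ,s},\Delta_{\prec,s})$ is called a quasi-triangular anti-pre-Novikov bialgebra (the paper shows it is always an anti-pre-Novikov bialgebra); it is called factorizable if in addition $T_{s+\tau(s)}:A^*\to A$ is a linear isomorphism. A Rota–Baxter operator of weight $\lambda$ on $(A,\succ,\prec)$ is a linear $P$ with $P(x)\prec P(y)=P(P(x)\prec y+x\prec P(y)+\lambda x\prec y)$ and $P(x)\succ P(y)=P(P(x)\succ y+x\succ P(y)+\lambda x\succ y)$. A quadratic Rota–Baxter anti-pre-Novikov algebra of weight $\lambda$ is $(A,\succ,\prec,P,\omega)$ with $P$ Rota–Baxter of weight $\lambda$, $\omega$ non-degenerate symmetric with $\omega(x\prec y,z)=-\omega(x,z\circ y)$, $\omega(x\succ y,z)=\omega(x\circ z+z\circ x,y)$, and $\omega(P(x),y)+\omega(x,P(y))+\lambda\omega(x,y)=0$. *)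

(* A finite-dimensional k-vector space A is modelled in
   coordinates as A = k^n = 'rV[K]_n; the dual A^* is also 'rV[K]_n with the
   pairing <zeta, y> = sum_i zeta_i y_i; A (x) A is 'M[K]_n (entry (i,j) is the
   coefficient of e_i (x) e_j); A (x) A (x) A is {ffun 'I_n * 'I_n * 'I_n -> K}. *)
From HB Require Import structures.
From mathcomp Require Import all_boot all_order all_algebra.
Set Implicit Arguments. Unset Strict Implicit. Unset Printing Implicit Defensive.
Import GRing.Theory.
Local Open Scope ring_scope.

Section APN.
Variables (K : fieldType) (n : nat).
Local Notation A := 'rV[K]_n.

Definition ebas (i : 'I_n) : A := delta_mx 0 i.

Definition dpair (zeta y : A) : K := \sum_(i < n) zeta 0 i * y 0 i.

Definition tensor2 (x y : A) : 'M[K]_n := \matrix_(i, j) (x 0 i * y 0 j).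
Definition tensor3 (x y z : A) : {ffun 'I_n * 'I_n * 'I_n -> K} :=
  [ffun t => x 0 t.1.1 * y 0 t.1.2 * z 0 t.2].

(* canonical decomposition s = sum_p tl s p (x) tr p,  p = (i,j),
   tl s (i,j) = s_ij e_i,  tr (i,j) = e_j *)
Definition tl (s : 'M[K]_n) (p : 'I_n * 'I_n) : A := s p.1 p.2 *: ebas p.1.
Definition tr (p : 'I_n * 'I_n) : A := ebas p.2.

Definition tmap (f g : A -> A) (s : 'M[K]_n) : 'M[K]_n :=
  \sum_(p : 'I_n * 'I_n) tensor2 (f (tl s p)) (g (tr p)).

Definition tau (s : 'M[K]_n) : 'M[K]_n := s^T.

(* T_r : A^* -> A,  <T_r zeta, eta> = <r, zeta (x) eta> *)
Definition Tmap (r : 'M[K]_n) (zeta : A) : A := \row_j \sum_(i < n) r i j * zeta 0 i.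

Definition sharp (omega : A -> A -> K) (x : A) : A := \row_j omega x (ebas j).

Definition bilinear_prod (f : A -> A -> A) : Prop :=
  (forall (a : K) x y z, f (a *: x + y) z = a *: f x z + f y z) /\
  (forall (a : K) x y z, f z (a *: x + y) = a *: f z x + f z y).

Definition bilinear_form (f : A -> A -> K) : Prop :=
  (forall (a : K) x y z, f (a *: x + y) z = a * f x z + f y z) /\
  (forall (a : K) x y z, f z (a *: x + y) = a * f z x + f z y).

Definition linear_map (P : A -> A) : Prop :=
  forall (a : K) x y, P (a *: x + y) = a *: P x + P y.

Variables (succ prec : A -> A -> A).

Definition circ x y := succ x y + prec x y.
Definition odot x y := succ x y + prec y x.
Definition star x y := circ x y + circ y x.

Definition is_APN : Prop :=
  bilinear_prod succ /\ bilinear_prod prec /\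
  (forall x y z, succ (circ x y - circ y x) z = succ y (succ x z) - succ x (succ y z)) /\
  (forall x y z, prec x (circ y z) =
                 prec (succ y x) z - prec (prec x y) z - succ y (prec x z)) /\
  (forall x y z, succ (circ x y) z = - prec (succ x z) y) /\
  (forall x y z, prec (prec x y) z = prec (prec x z) y) /\
  (forall x y z, prec (circ x y - circ y x) z = succ x (circ y z) - succ y (circ x z)).

Definition APN_YBE (s : 'M[K]_n) : Prop :=
  \sum_(p : 'I_n * 'I_n) \sum_(q : 'I_n * 'I_n)
     (tensor3 (circ (tl s p) (tl s q)) (tr p) (tr q)
      + tensor3 (tl s q) (tl s p) (odot (tr p) (tr q))
      + tensor3 (tl s p) (prec (tr p) (tl s q)) (tr q)) = 0.

Definition invariant (r : 'M[K]_n) : Prop :=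
  forall x, tmap id (star x) r - tmap (succ x) id r = 0 /\
            tmap (circ x) id r - tmap id (odot x) r = 0.

Definition Delta_succ (s : 'M[K]_n) (x : A) := tmap id (star x) s - tmap (succ x) id s.
Definition Delta_prec (s : 'M[K]_n) (x : A) := tmap (circ x) id s - tmap id (odot x) s.

Definition factorizable (s : 'M[K]_n) : Prop :=
  APN_YBE s /\ invariant (s + tau s) /\ bijective (Tmap (s + tau s)).

Definition RB_operator (lam : K) (P : A -> A) : Prop :=
  linear_map P /\
  (forall x y, prec (P x) (P y) = P (prec (P x) y + prec x (P y) + lam *: prec x y)) /\
  (forall x y, succ (P x) (P y) = P (succ (P x) y + succ x (P y) + lam *: succ x y)).

Definition quadratic_RB_APN (lam : K) (P : A -> A) (omega : A -> A -> K) : Prop :=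
  is_APN /\ RB_operator lam P /\
  bilinear_form omega /\
  (forall x y, omega x y = omega y x) /\
  (forall x, (forall y, omega x y = 0) -> x = 0) /\
  (forall x y z, omega (prec x y) z = - omega x (circ z y)) /\
  (forall x y z, omega (succ x y) z = omega (circ x z + circ z x) y) /\
  (forall x y, omega (P x) y + omega x (P y) + lam * omega x y = 0).

End APN.

From Pilot Require Import Defs.
From HB Require Import structures.
From mathcomp Require Import all_boot all_order all_algebra.
From mathcomp Require Import ring.
Set Implicit Arguments. Unset Strict Implicit. Unset Printing Implicit Defensive.
Import GRing.Theory.
Local Open Scope ring_scope.

(* Identify A^* with A through omega^#.  Then T_s omega^# = P, and the compatibility
   omega(P x, y) + omega(x, P y) + lam omega(x, y) = 0 says exactly that
   T_{tau s} omega^# = - lam id - P, i.e. T_{s + tau s} omega^# = - lam id.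
   Pairing the two invariance tensors of r = s + tau(s) with omega^# a (x) omega^# b turns
   invariance of r into invariance of omega.  Pairing the APN-YBE tensor of s with
   omega^# c (x) omega^# a (x) omega^# b gives
   omega(c, P a o P b - P(P a o b + a o P b + lam a o b)), so the APN-YBE is the
   Rota-Baxter identity for o; for an invariant omega it splits into the Rota-Baxter
   identities for > and <. *)

Section AntiPreNovikov.
Variables (K : fieldType) (n : nat).
Local Notation A := 'rV[K]_n.
Local Notation eb := (@ebas K n).

Definition scalar_map (g : A -> K) := forall a x y, g (a *: x + y) = a * g x + g y.

Section LinearMap.
Variable f : A -> A.
Hypothesis f_lin : linear_map f.
Let fL : {linear A -> A} := HB.pack f (GRing.isLinear.Build K A A *:%R f f_lin).

Lemma linear_map0 : f 0 = 0. Proof. exact: (linear0 fL). Qed.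
Lemma linear_mapD x y : f (x + y) = f x + f y. Proof. exact: (linearD fL). Qed.
Lemma linear_mapN x : f (- x) = - f x. Proof. exact: (linearN fL). Qed.
Lemma linear_mapZ a x : f (a *: x) = a *: f x. Proof. exact: (linearZ_LR fL). Qed.
Lemma linear_map_sum (I : finType) (F : I -> A) : f (\sum_i F i) = \sum_i f (F i).
Proof. exact: (linear_sum fL). Qed.
End LinearMap.

Section ScalarMap.
Variable g : A -> K.
Hypothesis g_lin : scalar_map g.
Let gL : {scalar A} := HB.pack g (GRing.isLinear.Build K A K *%R g g_lin).

Lemma scalar_map0 : g 0 = 0. Proof. exact: (linear0 gL). Qed.
Lemma scalar_mapD x y : g (x + y) = g x + g y. Proof. exact: (linearD gL). Qed.
Lemma scalar_mapN x : g (- x) = - g x. Proof. exact: (linearN gL). Qed.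
Lemma scalar_mapB x y : g (x - y) = g x - g y. Proof. exact: (linearB gL). Qed.
Lemma scalar_mapZ a x : g (a *: x) = a * g x. Proof. exact: (linearZ_LR gL). Qed.
Lemma scalar_map_sum (I : finType) (F : I -> A) : g (\sum_i F i) = \sum_i g (F i).
Proof. exact: (linear_sum gL). Qed.
End ScalarMap.

Section BilinearProduct.
Variable f : A -> A -> A.
Hypothesis f_bil : bilinear_prod f.

Lemma bilinear_prod_linl z : linear_map (f^~ z). Proof. by move=> a x y; rewrite f_bil.1. Qed.
Lemma bilinear_prod_linr z : linear_map (f z). Proof. by move=> a x y; rewrite f_bil.2. Qed.

Lemma prodDl x y z : f (x + y) z = f x z + f y z.
Proof. exact: linear_mapD (bilinear_prod_linl z) x y. Qed.
Lemma prodDr x y z : f z (x + y) = f z x + f z y.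
Proof. exact: linear_mapD (bilinear_prod_linr z) x y. Qed.
Lemma prodNl x z : f (- x) z = - f x z.
Proof. exact: linear_mapN (bilinear_prod_linl z) x. Qed.
Lemma prodNr x z : f z (- x) = - f z x.
Proof. exact: linear_mapN (bilinear_prod_linr z) x. Qed.
Lemma prodZl a x z : f (a *: x) z = a *: f x z.
Proof. exact: linear_mapZ (bilinear_prod_linl z) a x. Qed.
Lemma prodZr a x z : f z (a *: x) = a *: f z x.
Proof. exact: linear_mapZ (bilinear_prod_linr z) a x. Qed.
Lemma prod_suml (I : finType) (F : I -> A) z : f (\sum_i F i) z = \sum_i f (F i) z.
Proof. by have /= := linear_map_sum (bilinear_prod_linl z) F. Qed.
Lemma prod_sumr (I : finType) (F : I -> A) z : f z (\sum_i F i) = \sum_i f z (F i).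
Proof. by have /= := linear_map_sum (bilinear_prod_linr z) F. Qed.
End BilinearProduct.

Section BilinearForm.
Variable om : A -> A -> K.
Hypothesis om_bil : bilinear_form om.

Lemma bilinear_form_linl z : scalar_map (om^~ z). Proof. by move=> a x y; rewrite om_bil.1. Qed.
Lemma bilinear_form_linr z : scalar_map (om z). Proof. by move=> a x y; rewrite om_bil.2. Qed.

Lemma formDl x y z : om (x + y) z = om x z + om y z.
Proof. exact: scalar_mapD (bilinear_form_linl z) x y. Qed.
Lemma formDr x y z : om z (x + y) = om z x + om z y.
Proof. exact: scalar_mapD (bilinear_form_linr z) x y. Qed.
Lemma formNl x z : om (- x) z = - om x z.
Proof. exact: scalar_mapN (bilinear_form_linl z) x. Qed.
Lemma formNr x z : om z (- x) = - om z x.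
Proof. exact: scalar_mapN (bilinear_form_linr z) x. Qed.
Lemma formZl a x z : om (a *: x) z = a * om x z.
Proof. exact: scalar_mapZ (bilinear_form_linl z) a x. Qed.
Lemma formZr a x z : om z (a *: x) = a * om z x.
Proof. exact: scalar_mapZ (bilinear_form_linr z) a x. Qed.
Lemma form0r z : om z 0 = 0.
Proof. exact: scalar_map0 (bilinear_form_linr z). Qed.
End BilinearForm.

Lemma dpairC (x y : A) : dpair x y = dpair y x.
Proof. by apply: eq_bigr => i _; rewrite mulrC. Qed.

Lemma dpair_scalar (z : A) : scalar_map (dpair z).
Proof.
move=> a x y; rewrite /dpair mulr_sumr -big_split.
by apply: eq_bigr => i _; rewrite !mxE mulrDr mulrCA.
Qed.

Lemma dpair_bilinear : bilinear_form (@dpair K n).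
Proof. by split=> a x y z; rewrite ?(dpairC _ z) dpair_scalar. Qed.

Lemma ebasE i a : eb i 0 a = (a == i)%:R.
Proof. by rewrite mxE eqxx. Qed.

Lemma dpair_ebas (z : A) j : dpair z (eb j) = z 0 j.
Proof.
rewrite /dpair (bigD1 j) //= ebasE eqxx mulr1 big1 ?addr0 // => i /negbTE ji.
by rewrite ebasE ji mulr0.
Qed.

Lemma dpair_inj (u v : A) : (forall z, dpair z u = dpair z v) -> u = v.
Proof. by move=> h; apply/rowP => j; rewrite -!dpair_ebas !(dpairC _ (eb j)) h. Qed.

Lemma TmapE (r : 'M[K]_n) (z : A) : Tmap r z = z *m r.
Proof. by apply/rowP => j; rewrite !mxE; apply: eq_bigr => i _; rewrite mulrC. Qed.

Lemma Tmap_linear (r : 'M[K]_n) : linear_map (Tmap r).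
Proof. by move=> a x y; rewrite !TmapE mulmxDl scalemxAl. Qed.

Lemma Tmap_sum (I : finType) (M : I -> 'M[K]_n) (z : A) :
  Tmap (\sum_k M k) z = \sum_k Tmap (M k) z.
Proof. by rewrite TmapE mulmx_sumr; apply: eq_bigr => k _; rewrite TmapE. Qed.

Lemma TmapDl (r1 r2 : 'M[K]_n) (z : A) : Tmap (r1 + r2) z = Tmap r1 z + Tmap r2 z.
Proof. by rewrite !TmapE mulmxDr. Qed.

Lemma Tmap0l (z : A) : Tmap 0 z = 0.
Proof. by rewrite TmapE mulmx0. Qed.

Lemma TmapBl (r1 r2 : 'M[K]_n) (z : A) : Tmap (r1 - r2) z = Tmap r1 z - Tmap r2 z.
Proof. by rewrite !TmapE mulmxBr. Qed.

Lemma Tmap_eq0 (M : 'M[K]_n) : (forall z, Tmap M z = 0) -> M = 0.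
Proof. by move=> h; apply/row_matrixP => i; rewrite rowE row0 -TmapE h. Qed.

Lemma dpair_Tmap_tau (r : 'M[K]_n) (z y : A) : dpair y (Tmap (tau r) z) = dpair z (Tmap r y).
Proof.
rewrite /dpair; under eq_bigr do rewrite mxE mulr_sumr.
rewrite exchange_big; apply: eq_bigr => i _; rewrite mxE mulr_sumr.
by apply: eq_bigr => j _; rewrite mxE; ring.
Qed.

Lemma tau_symmetrized (s : 'M[K]_n) : tau (s + tau s) = s + tau s.
Proof. by rewrite /tau linearD /= trmxK addrC. Qed.

Lemma Tmap_tensor2 (x y z : A) : Tmap (tensor2 x y) z = dpair z x *: y.
Proof.
apply/rowP => j; rewrite !mxE mulr_suml; apply: eq_bigr => i _.
by rewrite !mxE; ring.
Qed.

Lemma Tmap_tlE (s : 'M[K]_n) (z : A) : Tmap s z = \sum_p dpair z (tl s p) *: tr K p.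
Proof.
rewrite (eq_bigr (fun p => (s p.1 p.2 * z 0 p.1) *: eb p.2)) => [|p _]; last first.
  by rewrite /tl (scalar_mapZ (dpair_scalar z)) dpair_ebas.
rewrite -(pair_bigA _ (fun i j => (s i j * z 0 i) *: eb j)) /= exchange_big /=.
rewrite [LHS]row_sum_delta; apply: eq_bigr => j _; rewrite -scaler_suml !mxE.
by congr (_ *: _); apply: eq_bigr => i _; rewrite mulrC.
Qed.

Lemma Tmap_tau_tlE (s : 'M[K]_n) (w : A) : Tmap (tau s) w = \sum_p dpair w (tr K p) *: tl s p.
Proof.
rewrite (eq_bigr (fun p => (w 0 p.2 * s p.1 p.2) *: eb p.1)) => [|p _]; last first.
  by rewrite /tl dpair_ebas scalerA.
rewrite -(pair_bigA _ (fun i j => (w 0 j * s i j) *: eb i)) /=.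
rewrite [LHS]row_sum_delta; apply: eq_bigr => i _; rewrite -scaler_suml !mxE.
by congr (_ *: _); apply: eq_bigr => j _; rewrite !mxE mulrC.
Qed.

(* [dpair w (Tmap M z)] is the pairing of the 2-tensor [M] with [z (x) w]. *)
Lemma Tmap_tmap (f g : A -> A) (s : 'M[K]_n) (z : A) :
  Tmap (tmap f g s) z = \sum_p dpair z (f (tl s p)) *: g (tr K p).
Proof. by rewrite Tmap_sum; apply: eq_bigr => p _; rewrite Tmap_tensor2. Qed.

Lemma Tmap_tmap_idl (g : A -> A) (g_lin : linear_map g) (s : 'M[K]_n) (z : A) :
  Tmap (tmap id g s) z = g (Tmap s z).
Proof.
rewrite Tmap_tmap Tmap_tlE (linear_map_sum g_lin).
by apply: eq_bigr => p _; rewrite (linear_mapZ g_lin).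
Qed.

Lemma dpair_Tmap_tmap_idr (f : A -> A) (f_lin : linear_map f) (s : 'M[K]_n) (z w : A) :
  dpair w (Tmap (tmap f id s) z) = dpair z (f (Tmap (tau s) w)).
Proof.
rewrite Tmap_tmap Tmap_tau_tlE (linear_map_sum f_lin).
rewrite !(scalar_map_sum (dpair_scalar _)); apply: eq_bigr => p _.
by rewrite (linear_mapZ f_lin) !(scalar_mapZ (dpair_scalar _)) mulrC.
Qed.

Lemma dpair_bilinear_sum (f : A -> A -> A) (f_bil : bilinear_prod f) (I J : finType)
    (c : I -> K) (d : J -> K) (x : I -> A) (y : J -> A) (w : A) :
  \sum_p \sum_q c p * d q * dpair w (f (x p) (y q)) =
  dpair w (f (\sum_p c p *: x p) (\sum_q d q *: y q)).
Proof.
rewrite (prod_suml f_bil) (scalar_map_sum (dpair_scalar w)).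
apply: eq_bigr => p _; rewrite (prodZl f_bil) (scalar_mapZ (dpair_scalar w)).
rewrite (prod_sumr f_bil) (scalar_map_sum (dpair_scalar w)) mulr_sumr.
by apply: eq_bigr => q _; rewrite (prodZr f_bil) (scalar_mapZ (dpair_scalar w)) mulrA.
Qed.

Definition dpair3 (F : {ffun 'I_n * 'I_n * 'I_n -> K}) (z w u : A) :=
  \sum_t F t * tensor3 z w u t.

Lemma sum_triple (G : 'I_n * 'I_n * 'I_n -> K) :
  \sum_t G t = \sum_i \sum_j \sum_k G ((i, j), k).
Proof. by rewrite pair_bigA pair_bigA; apply: eq_bigr => -[[i j] k]. Qed.

Lemma dpair3_tensor3 (x y v z w u : A) :
  dpair3 (tensor3 x y v) z w u = dpair z x * dpair w y * dpair u v.
Proof.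
rewrite /dpair3 sum_triple /dpair !mulr_suml; apply: eq_bigr => i _.
rewrite -mulrA mulr_suml mulr_sumr; apply: eq_bigr => j _; rewrite !mulr_sumr.
by apply: eq_bigr => k _; rewrite !ffunE /=; ring.
Qed.

Lemma dpair3_sum (I : finType) (F : I -> {ffun 'I_n * 'I_n * 'I_n -> K}) (z w u : A) :
  dpair3 (\sum_k F k) z w u = \sum_k dpair3 (F k) z w u.
Proof.
rewrite /dpair3 [RHS]exchange_big; apply: eq_bigr => t _.
by rewrite sum_ffunE mulr_suml.
Qed.

Lemma dpair3D (F G : {ffun 'I_n * 'I_n * 'I_n -> K}) (z w u : A) :
  dpair3 (F + G) z w u = dpair3 F z w u + dpair3 G z w u.
Proof. by rewrite /dpair3 -big_split; apply: eq_bigr => t _; rewrite ffunE mulrDl. Qed.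

Lemma dpair3_ebas (F : {ffun 'I_n * 'I_n * 'I_n -> K}) i j k :
  dpair3 F (eb i) (eb j) (eb k) = F ((i, j), k).
Proof.
rewrite /dpair3 (bigD1 ((i, j), k)) //= big1 => [|[[a b] c] /negbTE t_neq].
  by rewrite !ffunE /= !ebasE !eqxx !mulr1 addr0.
by rewrite ffunE /= !ebasE -!natrM !mulnb -!xpair_eqE t_neq mulr0.
Qed.

Lemma dpair3_0 (z w u : A) : dpair3 0 z w u = 0.
Proof. by rewrite /dpair3 big1 // => t _; rewrite ffunE mul0r. Qed.

Lemma dpair3_eq0 (F : {ffun 'I_n * 'I_n * 'I_n -> K}) :
  (forall z w u, dpair3 F z w u = 0) -> F = 0.
Proof. by move=> h; apply/ffunP => -[[i j] k]; rewrite -dpair3_ebas h ffunE. Qed.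

Section Products.
Variables succ prec : A -> A -> A.
Hypotheses (succ_bil : bilinear_prod succ) (prec_bil : bilinear_prod prec).
Local Notation circ := (circ succ prec).
Local Notation odot := (odot succ prec).
Local Notation star := (star succ prec).

Lemma circ_bilinear : bilinear_prod circ.
Proof.
by split=> a x y z; rewrite /Defs.circ (succ_bil.1, succ_bil.2) (prec_bil.1, prec_bil.2)
  scalerDr addrACA.
Qed.

Lemma odot_bilinear : bilinear_prod odot.
Proof.
by split=> a x y z; rewrite /Defs.odot (succ_bil.1, succ_bil.2) (prec_bil.1, prec_bil.2)
  scalerDr addrACA.
Qed.

Lemma star_linear x : linear_map (star x).
Proof.
by move=> a u v; rewrite /Defs.star circ_bilinear.1 circ_bilinear.2 [in RHS]scalerDr addrACA.
Qed.

Definition YBE_tensor (s : 'M[K]_n) : {ffun 'I_n * 'I_n * 'I_n -> K} :=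
  \sum_p \sum_q
     (tensor3 (circ (tl s p) (tl s q)) (tr K p) (tr K q)
      + tensor3 (tl s q) (tl s p) (odot (tr K p) (tr K q))
      + tensor3 (tl s p) (prec (tr K p) (tl s q)) (tr K q)).

Lemma dpair3_YBE (s : 'M[K]_n) (z w u : A) :
  dpair3 (YBE_tensor s) z w u =
  dpair z (circ (Tmap (tau s) w) (Tmap (tau s) u)) + dpair u (odot (Tmap s w) (Tmap s z))
  + dpair w (prec (Tmap s z) (Tmap (tau s) u)).
Proof.
rewrite !Tmap_tau_tlE !Tmap_tlE.
rewrite -(dpair_bilinear_sum circ_bilinear) -(dpair_bilinear_sum odot_bilinear).
rewrite -(dpair_bilinear_sum prec_bil).
rewrite dpair3_sum -!big_split /=; apply: eq_bigr => p _.
rewrite dpair3_sum -!big_split /=; apply: eq_bigr => q _.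
by rewrite !dpair3D !dpair3_tensor3; ring.
Qed.

End Products.

Section Sharp.
Variable om : A -> A -> K.
Hypothesis om_bil : bilinear_form om.

Lemma dpair_sharp x y : dpair (sharp om x) y = om x y.
Proof.
rewrite {2}(row_sum_delta y) (scalar_map_sum (bilinear_form_linr om_bil x)).
by apply: eq_bigr => j _; rewrite (formZr om_bil) !mxE mulrC.
Qed.

Lemma sharp_linear : linear_map (sharp om).
Proof. by move=> a x y; apply/rowP => j; rewrite !mxE om_bil.1. Qed.

Lemma sharp_bijective : (forall x, (forall y, om x y = 0) -> x = 0) -> bijective (sharp om).
Proof.
move=> om_nondeg; pose W : 'M[K]_n := \matrix_(i, j) om (eb i) (eb j).
have sharpW x : sharp om x = x *m W.
  apply/rowP => j; rewrite {1}(row_sum_delta x) !mxE.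
  rewrite (scalar_map_sum (bilinear_form_linl om_bil (eb j))).
  by apply: eq_bigr => i _; rewrite (formZl om_bil) !mxE.
have W_unit : W \in unitmx.
  rewrite -row_free_unit; apply: inj_row_free => v vW0; apply: om_nondeg => y.
  by rewrite -dpair_sharp sharpW vW0 dpairC (scalar_map0 (dpair_scalar y)).
by exists (mulmx^~ (invmx W)) => x; rewrite sharpW ?mulmxK ?mulmxKV.
Qed.

Hypothesis sharp_bij : bijective (sharp om).

Lemma form_nondeg x : (forall y, om x y = 0) -> x = 0.
Proof.
move=> om_x0; apply: (bij_inj sharp_bij); rewrite (linear_map0 sharp_linear).
by apply/rowP => j; rewrite !mxE om_x0.
Qed.

Lemma dpair_sharp_inj (u v : A) : (forall y, dpair (sharp om y) u = dpair (sharp om y) v) -> u = v.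
Proof.
have [g _ gK] := sharp_bij.
by move=> h; apply: dpair_inj => z; rewrite -[z]gK h.
Qed.

Lemma tensor_eq0_sharp (M : 'M[K]_n) :
  (forall a b, dpair (sharp om b) (Tmap M (sharp om a)) = 0) -> M = 0.
Proof.
have [g _ gK] := sharp_bij.
move=> h; apply: Tmap_eq0 => z; apply: dpair_sharp_inj => b.
by rewrite -[z]gK h (scalar_map0 (dpair_scalar _)).
Qed.

End Sharp.

Lemma bijective_scaled_inverse (f g : A -> A) (c : K) :
  c != 0 -> bijective g -> (forall x, f (g x) = c *: x) -> bijective f.
Proof.
move=> c0 [g' gK g'K] fg; exists (fun y => g (c^-1 *: y)) => [z|y].
  by rewrite -[z]g'K fg scalerA mulVf // scale1r.
by rewrite fg scalerA divff // scale1r.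
Qed.

Section FormOfInverse.
Variables (r : 'M[K]_n) (c : K) (om : A -> A -> K).
Hypotheses (r_sym : tau r = r) (r_bij : bijective (Tmap r)).
Hypothesis omT : forall z y, om (Tmap r z) y = c * dpair z y.

Lemma inverse_form_bilinear : bilinear_form om.
Proof.
have [g _ gK] := r_bij; split=> a x y z.
  by rewrite -[x]gK -[y]gK -(Tmap_linear r) !omT dpair_bilinear.1 mulrDr mulrCA.
by rewrite -[z]gK !omT dpair_scalar mulrDr mulrCA.
Qed.

Lemma inverse_form_sym x y : om x y = om y x.
Proof.
have [g _ gK] := r_bij.
rewrite -[in LHS](gK x) -[in RHS](gK y) !omT; congr (_ * _).
by rewrite -{1}(gK y) -{2}(gK x) -{1}r_sym dpair_Tmap_tau.
Qed.

Lemma sharp_Tmap z : sharp om (Tmap r z) = c *: z.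
Proof. by apply/rowP => j; rewrite !mxE omT dpair_ebas. Qed.

Lemma Tmap_sharp x : Tmap r (sharp om x) = c *: x.
Proof.
have [g _ gK] := r_bij.
by rewrite -[x in LHS]gK sharp_Tmap (linear_mapZ (Tmap_linear r)) gK.
Qed.

End FormOfInverse.

Definition RB_identity (op : A -> A -> A) (lam : K) (P : A -> A) :=
  forall x y, op (P x) (P y) = P (op (P x) y + op x (P y) + lam *: op x y).

Definition form_invariant (succ prec : A -> A -> A) (om : A -> A -> K) :=
  (forall x y z, om (prec x y) z = - om x (circ succ prec z y)) /\
  (forall x y z, om (succ x y) z = om (star succ prec x z) y).

Section InvariantForm.
Variables (succ prec : A -> A -> A) (om : A -> A -> K).
Hypotheses (succ_bil : bilinear_prod succ) (prec_bil : bilinear_prod prec).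
Hypotheses (om_bil : bilinear_form om) (om_sym : forall x y, om x y = om y x).
Local Notation circ := (circ succ prec).
Local Notation odot := (odot succ prec).
Local Notation star := (star succ prec).
Let circ_bil := circ_bilinear succ_bil prec_bil.
Let odot_bil := odot_bilinear succ_bil prec_bil.
Let star_lin := star_linear succ_bil prec_bil.

Lemma form_invariantE : form_invariant succ prec om <->
  (forall x a b, om b (star x a) = om a (succ x b)) /\
  (forall x a b, om a (circ x b) = om b (odot x a)).
Proof.
split=> [[inv_prec inv_succ] | [inv_star inv_circ]]; split=> x y z.
- by rewrite om_sym -inv_succ om_sym.
- rewrite /Defs.odot (formDr om_bil) !(om_sym z) inv_succ inv_prec /Defs.star.
  by rewrite (formDl om_bil) !(om_sym _ y); ring.
- rewrite om_sym; apply: (addrI (om z (succ y x))).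
  rewrite /Defs.odot -(formDr om_bil) -inv_circ -inv_star /Defs.star (formDr om_bil).
  ring.
- by rewrite om_sym -inv_star om_sym.
Qed.

Hypothesis sharp_bij : bijective (sharp om).

Lemma invariant_sharpE (r : 'M[K]_n) (c : K) :
  c != 0 -> tau r = r -> (forall x, Tmap r (sharp om x) = c *: x) ->
  Defs.invariant succ prec r <-> form_invariant succ prec om.
Proof.
move=> c0 r_sym r_sharp; rewrite form_invariantE.
have pair_succ x a b :
    dpair (sharp om b) (Tmap (tmap id (star x) r - tmap (succ x) id r) (sharp om a)) =
    c * (om b (star x a) - om a (succ x b)).
  rewrite TmapBl (scalar_mapB (dpair_scalar _)) (Tmap_tmap_idl (star_lin x)).
  rewrite (dpair_Tmap_tmap_idr (bilinear_prod_linr succ_bil x)) r_sym !r_sharp.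
  rewrite (linear_mapZ (star_lin x)) (prodZr succ_bil).
  by rewrite !(scalar_mapZ (dpair_scalar _)) !(dpair_sharp om_bil) mulrBr.
have pair_circ x a b :
    dpair (sharp om b) (Tmap (tmap (circ x) id r - tmap id (odot x) r) (sharp om a)) =
    c * (om a (circ x b) - om b (odot x a)).
  rewrite TmapBl (scalar_mapB (dpair_scalar _)) (Tmap_tmap_idl (bilinear_prod_linr odot_bil x)).
  rewrite (dpair_Tmap_tmap_idr (bilinear_prod_linr circ_bil x)) r_sym !r_sharp.
  rewrite (prodZr circ_bil) (prodZr odot_bil).
  by rewrite !(scalar_mapZ (dpair_scalar _)) !(dpair_sharp om_bil) mulrBr.
have cancel_pair (M : 'M[K]_n) a b (u v : K) :
    M = 0 -> dpair (sharp om b) (Tmap M (sharp om a)) = c * (u - v) -> u = v.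
  move=> -> /esym/eqP; rewrite Tmap0l (scalar_map0 (dpair_scalar _)) mulf_eq0 (negbTE c0).
  by rewrite subr_eq0 => /eqP.
split=> [inv | [inv_star inv_circ] x].
  by split=> x a b; have [M1 M2] := inv x; [apply: cancel_pair M1 _ | apply: cancel_pair M2 _].
split; apply: (tensor_eq0_sharp sharp_bij) => a b.
  by rewrite pair_succ inv_star subrr mulr0.
by rewrite pair_circ inv_circ subrr mulr0.
Qed.

End InvariantForm.

Definition rb_dual (lam : K) (P : A -> A) (x : A) : A := - (lam *: x) - P x.

Lemma RB_identity_circ (succ prec : A -> A -> A) (lam : K) (P : A -> A) :
  linear_map P -> RB_identity succ lam P -> RB_identity prec lam P ->
  RB_identity (circ succ prec) lam P.
Proof.
move=> P_lin RB_succ RB_prec x y; rewrite /Defs.circ RB_succ RB_prec -(linear_mapD P_lin).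
by congr P; apply/rowP => j; rewrite !mxE; ring.
Qed.

Section RotaBaxterForm.
Variables (succ prec : A -> A -> A) (lam : K) (P : A -> A) (om : A -> A -> K).
Hypotheses (succ_bil : bilinear_prod succ) (prec_bil : bilinear_prod prec).
Hypothesis P_lin : linear_map P.
Hypotheses (om_bil : bilinear_form om) (om_sym : forall x y, om x y = om y x).
Hypothesis om_inv : form_invariant succ prec om.
Hypothesis om_P : forall x y, om (P x) y + om x (P y) + lam * om x y = 0.
Local Notation circ := (circ succ prec).
Local Notation odot := (odot succ prec).
Local Notation star := (star succ prec).
Local Notation Q := (rb_dual lam P).
Let circ_bil := circ_bilinear succ_bil prec_bil.

Lemma form_adjoint x y : om (P x) y = om x (Q y).
Proof.
apply/eqP; rewrite -subr_eq0 -(om_P x y) /rb_dual (formDr om_bil) !(formNr om_bil).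
by rewrite (formZr om_bil); apply/eqP; ring.
Qed.

(* The left-hand side is the APN-YBE tensor of [s] paired with
   [omega^# c (x) omega^# a (x) omega^# b] when [T_s omega^# = P], see [dpair3_YBE]. *)
Lemma pairing_circ_RB_defect a b c :
  om c (circ (Q a) (Q b)) + om b (odot (P a) (P c)) + om a (prec (P c) (Q b)) =
  om c (circ (P a) (P b) - P (circ (P a) b + circ a (P b) + lam *: circ a b)).
Proof.
have [inv_prec inv_succ] := om_inv.
rewrite /Defs.odot (formDr om_bil) (om_sym b (succ _ _)) inv_succ (om_sym (star _ _)).
rewrite form_adjoint (om_sym b (prec _ _)) inv_prec form_adjoint.
rewrite (om_sym a (prec _ _)) inv_prec form_adjoint -!(formNr om_bil) -!(formDr om_bil).
congr (om c _); rewrite /Defs.star /rb_dual.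
rewrite !(prodDl circ_bil, prodDr circ_bil, prodNl circ_bil, prodNr circ_bil).
rewrite !(prodZl circ_bil, prodZr circ_bil, linear_mapD P_lin, linear_mapN P_lin, linear_mapZ P_lin).
by apply/rowP => j; rewrite !mxE; ring.
Qed.

Hypothesis om_nondeg : forall x, (forall y, om x y = 0) -> x = 0.
Hypothesis RB_circ : RB_identity circ lam P.

(* By invariance, pairing the >-defect at (x, y) with z gives omega(y, _) of the sum
   of the o-defects at (x, z) and (z, x). *)
Lemma RB_succ_of_circ : RB_identity succ lam P.
Proof.
have [_ inv_succ] := om_inv.
have moveP u v : om u (P v) = om v (Q u) by rewrite om_sym form_adjoint.
move=> x y; apply: subr0_eq; apply: om_nondeg => z.
have defects : Q (star (P x) z) - star (P x) (Q z) - Q (star x (Q z)) - lam *: star x (Q z) = 0.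
  transitivity ((circ (P x) (P z) - P (circ (P x) z + circ x (P z) + lam *: circ x z))
              + (circ (P z) (P x) - P (circ (P z) x + circ z (P x) + lam *: circ z x))).
    rewrite /Defs.star /rb_dual.
    rewrite !(prodDl circ_bil, prodDr circ_bil, prodNl circ_bil, prodNr circ_bil).
    rewrite !(prodZl circ_bil, prodZr circ_bil, linear_mapD P_lin, linear_mapN P_lin, linear_mapZ P_lin).
    by apply/rowP => j; rewrite !mxE; ring.
  by rewrite !RB_circ !subrr addr0.
rewrite (formDl om_bil) (formNl om_bil) form_adjoint inv_succ moveP.
rewrite !(formDl om_bil) (formZl om_bil) !inv_succ moveP !(om_sym (star _ _) y).
rewrite -(form0r om_bil y) -defects.
rewrite [in RHS](formDr om_bil) [in RHS](formNr om_bil) [in RHS](formDr om_bil).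
rewrite [in RHS](formNr om_bil) [in RHS](formDr om_bil) [in RHS](formNr om_bil) (formZr om_bil).
ring.
Qed.

Lemma RB_prec_of_circ : RB_identity prec lam P.
Proof.
move=> x y; apply: (addrI (succ (P x) (P y))).
rewrite -[LHS]/(circ (P x) (P y)) RB_circ RB_succ_of_circ -(linear_mapD P_lin).
by congr P; rewrite /Defs.circ; apply/rowP => j; rewrite !mxE; ring.
Qed.

End RotaBaxterForm.

Section Correspondence.
Variables (succ prec : A -> A -> A) (lam : K) (om : A -> A -> K) (s : 'M[K]_n) (P : A -> A).
Hypotheses (succ_bil : bilinear_prod succ) (prec_bil : bilinear_prod prec).
Hypotheses (om_bil : bilinear_form om) (om_sym : forall x y, om x y = om y x).
Hypothesis sharp_bij : bijective (sharp om).
Hypothesis s_sharp : forall x, Tmap s (sharp om x) = P x.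

Lemma Tmap_sharp_linear : linear_map P.
Proof. by move=> a x y; rewrite -!s_sharp (sharp_linear om_bil) (Tmap_linear s). Qed.

Lemma form_adjoint_iff :
  (forall x y, om (P x) y + om x (P y) + lam * om x y = 0) <->
  (forall x, Tmap (s + tau s) (sharp om x) = - lam *: x).
Proof.
have pairing x y : dpair (sharp om y) (Tmap (s + tau s) (sharp om x) + lam *: x) =
    om (P x) y + om x (P y) + lam * om x y.
  rewrite TmapDl s_sharp !(scalar_mapD (dpair_scalar _)) (scalar_mapZ (dpair_scalar _)).
  by rewrite dpair_Tmap_tau s_sharp !(dpair_sharp om_bil) (om_sym y (P x)) (om_sym y x).
split=> [om_P x | r_sharp x y].
  apply: (addIr (lam *: x)); rewrite scaleNr addNr; apply: (dpair_sharp_inj sharp_bij) => y.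
  by rewrite pairing om_P (scalar_map0 (dpair_scalar _)).
by rewrite -pairing r_sharp scaleNr addNr (scalar_map0 (dpair_scalar _)).
Qed.

Hypothesis om_P : forall x y, om (P x) y + om x (P y) + lam * om x y = 0.

Lemma Tmap_tau_sharp x : Tmap (tau s) (sharp om x) = rb_dual lam P x.
Proof.
have := form_adjoint_iff.1 om_P x; rewrite TmapDl s_sharp /rb_dual -scaleNr => <-.
by rewrite addrC addKr.
Qed.

Hypothesis om_inv : form_invariant succ prec om.

Lemma APN_YBE_iff_RB_circ : APN_YBE succ prec s <-> RB_identity (circ succ prec) lam P.
Proof.
have P_lin := Tmap_sharp_linear.
have YBE_sharp a b c :
    dpair3 (YBE_tensor succ prec s) (sharp om c) (sharp om a) (sharp om b) =
    om c (circ succ prec (P a) (P b)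
          - P (circ succ prec (P a) b + circ succ prec a (P b) + lam *: circ succ prec a b)).
  rewrite (dpair3_YBE succ_bil prec_bil) !Tmap_tau_sharp !s_sharp !(dpair_sharp om_bil).
  exact: (pairing_circ_RB_defect succ_bil prec_bil P_lin om_bil om_sym om_inv om_P).
have [g _ gK] := sharp_bij.
split=> [YBE a b | RB].
  apply/eqP; rewrite -subr_eq0; apply/eqP; apply: (form_nondeg om_bil sharp_bij) => c.
  by rewrite om_sym -YBE_sharp [YBE_tensor _ _ _]YBE dpair3_0.
change (YBE_tensor succ prec s = 0); apply: dpair3_eq0 => z w u.
by rewrite -[z]gK -[w]gK -[u]gK YBE_sharp RB subrr (form0r om_bil).
Qed.

End Correspondence.

Lemma factorizable_quadratic_RB_APN (succ prec : A -> A -> A) :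
  is_APN succ prec ->
  forall (s : 'M[K]_n) (lam : K), factorizable succ prec s -> lam != 0 ->
  forall om : A -> A -> K,
    (forall zeta y, om (Tmap (s + tau s) zeta) y = - lam * dpair zeta y) ->
    quadratic_RB_APN succ prec lam (fun x => Tmap s (sharp om x)) om.
Proof.
move=> APN s lam [YBE [r_inv r_bij]] lam0 om omT.
have [succ_bil [prec_bil _]] := APN.
have r_sym := tau_symmetrized s.
have nlam0 : - lam != 0 by rewrite oppr_eq0.
have om_bil := inverse_form_bilinear r_bij omT.
have om_sym := inverse_form_sym r_sym r_bij omT.
have sharp_bij := bijective_scaled_inverse nlam0 r_bij (sharp_Tmap omT).
have r_sharp := Tmap_sharp r_bij omT.
have om_nondeg := form_nondeg om_bil sharp_bij.
pose P x := Tmap s (sharp om x).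
have s_sharp x : Tmap s (sharp om x) = P x by [].
have P_lin := Tmap_sharp_linear om_bil s_sharp.
have om_P := (form_adjoint_iff lam om_bil om_sym sharp_bij s_sharp).2 r_sharp.
have om_inv :=
  (invariant_sharpE succ_bil prec_bil om_bil om_sym sharp_bij nlam0 r_sym r_sharp).1 r_inv.
have RB_circ :=
  (APN_YBE_iff_RB_circ succ_bil prec_bil om_bil om_sym sharp_bij s_sharp om_P om_inv).1 YBE.
have RB_succ :=
  RB_succ_of_circ succ_bil prec_bil P_lin om_bil om_sym om_inv om_P om_nondeg RB_circ.
have RB_prec :=
  RB_prec_of_circ succ_bil prec_bil P_lin om_bil om_sym om_inv om_P om_nondeg RB_circ.
have [inv_prec inv_succ] := om_inv.
by do !split=> //.
Qed.

Lemma quadratic_RB_APN_factorizable (succ prec : A -> A -> A) (lam : K) (P : A -> A)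
    (om : A -> A -> K) :
  lam != 0 -> quadratic_RB_APN succ prec lam P om ->
  forall s : 'M[K]_n, (forall x, Tmap s (sharp om x) = P x) -> factorizable succ prec s.
Proof.
move=> lam0 [APN [[P_lin [RB_prec RB_succ]] [om_bil [om_sym [om_nondeg [inv_prec [inv_succ om_P]]]]]]].
move=> s s_sharp.
have [succ_bil [prec_bil _]] := APN.
have nlam0 : - lam != 0 by rewrite oppr_eq0.
have sharp_bij := sharp_bijective om_bil om_nondeg.
have om_inv : form_invariant succ prec om by [].
have r_sharp := (form_adjoint_iff lam om_bil om_sym sharp_bij s_sharp).1 om_P.
split.
  apply/(APN_YBE_iff_RB_circ succ_bil prec_bil om_bil om_sym sharp_bij s_sharp om_P om_inv).
  exact: RB_identity_circ.
split; last exact: bijective_scaled_inverse nlam0 sharp_bij r_sharp.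
exact/(invariant_sharpE succ_bil prec_bil om_bil om_sym sharp_bij nlam0 (tau_symmetrized s) r_sharp).
Qed.

End AntiPreNovikov.

Theorem mainTheorem17 (K : fieldType) (n : nat)
    (succ prec : 'rV[K]_n -> 'rV[K]_n -> 'rV[K]_n) :
  (* (i) *)
  (is_APN succ prec ->
   forall (s : 'M[K]_n) (lam : K),
     factorizable succ prec s -> lam != 0 ->
     forall omega : 'rV[K]_n -> 'rV[K]_n -> K,
       (* omega(x,y) = - lam < T_{s+tau s}^{-1} x, y > *)
       (forall zeta y, omega (Tmap (s + tau s) zeta) y = - lam * dpair zeta y) ->
       quadratic_RB_APN succ prec lam (fun x => Tmap s (sharp omega x)) omega)
  /\
  (* (ii) *)
  (forall (lam : K) (P : 'rV[K]_n -> 'rV[K]_n) (omega : 'rV[K]_n -> 'rV[K]_n -> K),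
     lam != 0 -> quadratic_RB_APN succ prec lam P omega ->
     forall s : 'M[K]_n,
       (* T_s = P (omega^sharp)^{-1} *)
       (forall x, Tmap s (sharp omega x) = P x) ->
       factorizable succ prec s).
Proof.
split; [exact: factorizable_quadratic_RB_APN | exact: quadratic_RB_APN_factorizable].
Qed.
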